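(* Let $X\in\mathcal M_{\mathbf r}$ and $V\in\mathrm T_X\mathcal M_{\mathbf r}$. Suppose $V$ is represented both by cores $\delta V_1,\dots,\delta V_d$ as $V(i_1,\dots,i_d)=\sum_{k=1}^dU_1(i_1)\cdots U_{k-1}(i_{k-1})\delta V_k(i_k)U_{k+1}(i_{k+1})\cdots U_d(i_d)$ with $(\delta V_k^L)^\top U_k^L=0$ for $k\in[d-1]$, and by cores $\delta\tilde V_1,\dots,\delta\tilde V_d$ as $V(i_1,\dots,i_d)=\sum_{k=1}^dU_1(i_1)\cdots U_{k-1}(i_{k-1})\delta\tilde V_k(i_k)\tilde U_{k+1}(i_{k+1})\cdots\tilde U_d(i_d)$ with $(\delta\tilde V_k^L)^\top U_k^L=0$ for $k\in[d-1]$. Then $\delta\tilde V_k^L=\delta V_k^LR_k^\top$ for all $k\in[d-1]$, where $R_k\in\mathbb R^{r_k\times r_k}$ is the invertible matrix with $X_{\ge k+1}=\tilde X_{\ge k+1}R_k$; and $\delta\tilde V_d^L=\delta V_d^L$.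
   Context: Fix $d\ge2$, positive integers $n_1,\dots,n_d$, $\mathbf r=(r_1,\dots,r_{d-1})$, $r_0=r_d=1$. Flattenings $Z^{<\mu>}$ use colexicographic ordering of row indices $(i_1,\dots,i_\mu)$ and column indices $(i_{\mu+1},\dots,i_d)$. $\mathcal M_{\mathbf r}$ is the manifold of tensors of TT-rank $\mathbf r$ (TT-rank $=(\mathrm{rank}\,Z^{<1>},\dots,\mathrm{rank}\,Z^{<d-1>})$). $U_1,\dots,U_d$ is a minimal left-orthogonal TT decomposition of $X$ ($U_k\in\mathbb R^{r_{k-1}\times n_k\times r_k}$, $X(i_1,\dots,i_d)=U_1(i_1)\cdots U_d(i_d)$, $(U_k^L)^\top U_k^L=I$ for $k<d$, with $U^L=U^{<2>}$, $U^R=U^{<1>}$), and $\tilde U_1,\dots,\tilde U_d$ is the minimal right-orthogonal TT decomposition of $X$ obtained from it by right-orthogonalization ($\tilde U_k^R(\tilde U_k^R)^\top=I$ for $k\ge2$). Right interface matrices: $X_{\ge d+1}=1$, $X_{\ge k}^\top=U_k^R(X_{\ge k+1}^\top\otimes I_{n_k})$, and $\tilde X_{\ge k}$ likewise from $\tilde U_k$; $X_{\ge k+1}$ and $\tilde X_{\ge k+1}$ have the same column space, so an invertible $R_k$ with $X_{\ge k+1}=\tilde X_{\ge k+1}R_k$ exists. *)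

From HB Require Import structures.
From mathcomp Require Import all_boot all_order all_algebra.
Set Implicit Arguments. Unset Strict Implicit. Unset Printing Implicit Defensive.
Import Order.TTheory GRing.Theory Num.Theory.
Local Open Scope ring_scope.

(* Indexing convention: the mode index k ranges over 1..d (nat); a multi-index
   is a dependent function i : forall k : nat, 'I_(n k) (components outside
   1..d are irrelevant).  TT ranks r : nat -> nat with r 0 = r d = 1.
   The k-th core C k : 'I_(n k) -> 'M_(r (k-1), r k), C k (i_k) = C_k(i_k). *)

Definition core (R : Type) (n r : nat -> nat) :=
  forall k : nat, 'I_(n k) -> 'M[R]_(r k.-1, r k).

Fixpoint ttrange (R : pzRingType) (n r : nat -> nat) (C : core R n r)
    (i : forall k, 'I_(n k)) (a b : nat) {struct b} : 'M[R]_(r a, r b) :=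
  match b return 'M[R]_(r a, r b) with
  | 0 => pid_mx (r a)
  | b'.+1 => if (b'.+1 <= a)%N then pid_mx (r a)
             else ttrange C i a b' *m C b'.+1 (i b'.+1)
  end.

(* The (only) entry of a 1x1 matrix (r 0 = r d = 1). *)
Definition ent (R : pzRingType) p q (M : 'M[R]_(p, q)) : R :=
  \sum_(a < p) \sum_(b < q) M a b.

(* Left unfolding U^L = U^{<2>} : rows (alpha, i) in colexicographic order
   (alpha fastest, i.e. row index i * p + alpha), columns beta. *)
Definition leftunf (R : Type) m p q (C : 'I_m -> 'M[R]_(p, q)) : 'M[R]_(m * p, q) :=
  \matrix_(ia, b) (mxvec (\matrix_(i < m, a < p) C i a b)) 0 ia.

(* Right unfolding U^R = U^{<1>} : rows alpha, columns (i, beta) in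
   colexicographic order (i fastest, column index beta * m + i). *)
Definition rightunf (R : Type) m p q (C : 'I_m -> 'M[R]_(p, q)) : 'M[R]_(p, q * m) :=
  \matrix_(a, bi) (mxvec (\matrix_(b < q, i < m) C i a b)) 0 bi.

(* Row of the right interface matrix X_{>=k} at the multi-index
   (i_k, ..., i_d): it is (C_k(i_k) ... C_d(i_d))^T, a 1 x r_{k-1} row. *)
Definition Xge (R : pzRingType) (n r : nat -> nat) (d : nat) (C : core R n r)
    (i : forall k, 'I_(n k)) (k : nat) : 'M[R]_(r d, r k.-1) :=
  (ttrange C i k.-1 d)^T.

(* Flattenings Z^{<mu>}: rows indexed by (i_1..i_mu), columns by
   (i_{mu+1}..i_d). *)
Definition RowT (n : nat -> nat) (mu : nat) :=
  {dffun forall j : 'I_mu, 'I_(n j.+1)}.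
Definition ColT (n : nat -> nat) (d mu : nat) :=
  {dffun forall j : 'I_(d - mu), 'I_(n (mu + j).+1)}.

Definition joinidx (n : nat -> nat) (d : nat) (i0 : forall k, 'I_(n k)) (mu : nat)
    (a : RowT n mu) (b : ColT n d mu) : forall k, 'I_(n k) :=
  fun k => insubd (i0 k)
    (if ((0 < k) && (k <= mu))%N then
       (if (insub k.-1 : option 'I_mu) is Some j then val (a j) else 0%N)
     else if ((mu < k) && (k <= d))%N then
       (if (insub (k - mu).-1 : option 'I_(d - mu)) is Some j then val (b j) else 0%N)
     else 0%N).

Definition flat (R : Type) (n : nat -> nat) (d : nat)
    (X : (forall k, 'I_(n k)) -> R) (i0 : forall k, 'I_(n k)) (mu : nat) :
    'M[R]_(#|RowT n mu|, #|ColT n d mu|) :=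
  \matrix_(p, q) X (joinidx i0 (enum_val p) (enum_val q)).

Definition has_TTrank (R : fieldType) (n : nat -> nat) (d : nat)
    (X : (forall k, 'I_(n k)) -> R) (r : nat -> nat) : Prop :=
  forall (i0 : forall k, 'I_(n k)) (mu : nat),
    (0 < mu < d)%N -> \rank (flat d X i0 mu) = r mu.

From HB Require Import structures.
From mathcomp Require Import all_boot all_order all_algebra zify.
Set Implicit Arguments. Unset Strict Implicit. Unset Printing Implicit Defensive.
Import Order.TTheory GRing.Theory Num.Theory.
Local Open Scope ring_scope.

(* Put W_k := dV_k G_k - dVt_k, where G is the gauge with U_k G_k = G_(k-1) Ut_k.
   Since U_(>k) = G_k Ut_(>k), subtracting the two representations of V gives
   sum_k U_(<k) W_k Ut_(>k) = 0, and every W_k satisfies the gauge condition.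
   Peeling off one core at a time with the left-orthogonality of U_(k+1) shows
   that every tail of this sum vanishes, hence W_k Ut_(>k) = 0; since Ut_(>k)
   has full row rank r_k (because X has TT-rank r), W_k = 0.  The same
   full-rank argument identifies G_k with R_k^T. *)

Section TTrange.
Variables (R : pzRingType) (n r : nat -> nat).
Implicit Types (C : core R n r) (i : forall k, 'I_(n k)).

Lemma ttrange_id C i a : ttrange C i a a = 1%:M.
Proof. by case: a => [|a] /=; rewrite ?leqnn pid_mx_1. Qed.

Lemma ttrangeS C i a b : (a <= b)%N ->
  ttrange C i a b.+1 = ttrange C i a b *m C b.+1 (i b.+1).
Proof. by move=> ab /=; rewrite leqNgt ltnS ab. Qed.

Lemma ttrange_split C i a m b : (a <= m <= b)%N ->
  ttrange C i a b = ttrange C i a m *m ttrange C i m b.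
Proof.
elim: b => [|b IH] /andP[am].
  by rewrite leqn0 => /eqP m0; move: am; rewrite m0 leqn0 => /eqP ->;
    rewrite ttrange_id mul1mx.
rewrite leq_eqVlt ltnS => /orP[/eqP -> | mb]; first by rewrite ttrange_id mulmx1.
have ab := leq_trans am mb.
by rewrite !ttrangeS // IH ?am // mulmxA.
Qed.

Lemma ttrangeSl C i a b : (a < b)%N ->
  ttrange C i a b = C a.+1 (i a.+1) *m ttrange C i a.+1 b.
Proof.
move=> ab; rewrite (ttrange_split _ _ (m := a.+1)) ?leqnSn //.
by rewrite ttrangeS // ttrange_id mul1mx.
Qed.

Lemma eq_ttrange C i i' a b : (forall x, (a < x <= b)%N -> i x = i' x) ->
  ttrange C i a b = ttrange C i' a b.
Proof.
elim: b => [|b IH] eqi //=; case: ifP => // /negbT; rewrite -ltnNge => ab.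
rewrite IH ?eqi ?ab ?leqnn // => x /andP[ax xb].
by rewrite eqi // ax ltnW.
Qed.

Lemma ttrange_gauge (d : nat) (U T : core R n r) (G : forall k, 'M[R]_(r k)) :
    (forall k (ik : 'I_(n k)), (0 < k <= d)%N -> U k ik *m G k = G k.-1 *m T k ik) ->
  forall i a b, (a <= b <= d)%N -> G a *m ttrange T i a b = ttrange U i a b *m G b.
Proof.
move=> UG i a; elim=> [|b IH] /andP[ab bd].
  by move: ab; rewrite leqn0 => /eqP ->; rewrite !ttrange_id mul1mx mulmx1.
move: ab; rewrite leq_eqVlt ltnS => /orP[/eqP -> | ab].
  by rewrite !ttrange_id mul1mx mulmx1.
by rewrite !ttrangeS // mulmxA IH ?ab ?(ltnW bd) // -!mulmxA (UG b.+1).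
Qed.

Lemma ent_mul p m q (A : 'M[R]_(p, m)) (B : 'M[R]_(m, q)) :
  ent (A *m B) = \sum_j (\sum_a A a j) * (\sum_b B j b).
Proof.
rewrite /ent; under eq_bigr => a _ do under eq_bigr => b _ do rewrite mxE.
under eq_bigr => a _ do rewrite exchange_big.
rewrite exchange_big; apply: eq_bigr => j _; rewrite mulr_suml; apply: eq_bigr => a _.
by rewrite mulr_sumr.
Qed.

Lemma ent_inj p q : p = 1%N -> q = 1%N -> injective (@ent R p q).
Proof.
move=> -> -> M N; rewrite /ent !big_ord1 => eMN.
by apply/matrixP => a b; rewrite !ord1.
Qed.

End TTrange.

Section LeftUnfolding.
Variable R : pzRingType.

Lemma leftunfE m p q (A : 'I_m -> 'M[R]_(p, q)) i a b : leftunf A (mxvec_index i a) b = A i a b.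
Proof. by rewrite /leftunf mxE mxvecE mxE. Qed.

Lemma eq_leftunf m p q (A B : 'I_m -> 'M[R]_(p, q)) : A =1 B -> leftunf A = leftunf B.
Proof.
move=> eqAB; apply/matrixP => ia b; case/mxvec_indexP: ia => i a.
by rewrite !leftunfE eqAB.
Qed.

Lemma leftunf_mulmxr m p q s (A : 'I_m -> 'M[R]_(p, q)) (M : 'M[R]_(q, s)) :
  leftunf (fun x => A x *m M) = leftunf A *m M.
Proof.
apply/matrixP => ia b; case/mxvec_indexP: ia => i a.
rewrite leftunfE mxE [in RHS]mxE.
by apply: eq_bigr => j _; rewrite leftunfE.
Qed.

Lemma tr_leftunf_mul m p q s (A : 'I_m -> 'M[R]_(p, q)) (B : 'I_m -> 'M[R]_(p, s)) :
  (leftunf A)^T *m leftunf B = \sum_x (A x)^T *m B x.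
Proof.
apply/matrixP => y z; rewrite !mxE summxE.
rewrite (reindex _ (curry_mxvec_bij m p)) /=.
under [RHS]eq_bigr => x _ do rewrite mxE.
rewrite pair_big; apply: eq_bigr => -[i a] _ /=.
by rewrite mxE [in RHS]mxE !leftunfE.
Qed.

End LeftUnfolding.

Lemma leftunf_orthogonal (R : comPzRingType) m p q s
    (A : 'I_m -> 'M[R]_(p, q)) (B : 'I_m -> 'M[R]_(p, s)) :
  (leftunf A)^T *m leftunf B = 0 -> \sum_x (B x)^T *m A x = 0.
Proof.
by move=> AB0; rewrite -tr_leftunf_mul -[leftunf A]trmxK -trmx_mul AB0 trmx0.
Qed.

Section Interface.
Variables (R : pzRingType) (n r : nat -> nat) (d : nat).
Implicit Types (C : core R n r).

(* The right interface X_(>=k+1) of C has full column rank r_k. *)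
Definition interface_free C k :=
  forall v : 'rV[R]_(r k), (forall i, v *m ttrange C i k d = 0) -> v = 0.

Lemma interface_free_eq0 C k p (A : 'M[R]_(p, r k)) :
  interface_free C k -> (forall i, A *m ttrange C i k d = 0) -> A = 0.
Proof.
move=> freeC AC0; apply/row_matrixP => j; rewrite row0.
by apply: freeC => i; rewrite -row_mul AC0 row0.
Qed.

End Interface.

Lemma interface_free_gauge (R : comUnitRingType) (n r : nat -> nat) d k
    (U T : core R n r) (G : 'M[R]_(r k)) :
  G \in unitmx -> (forall i, ttrange U i k d = G *m ttrange T i k d) ->
  interface_free d U k -> interface_free d T k.
Proof.
move=> Gu UGT freeU v vT0; rewrite -(mulmxKV Gu v) [v *m _]freeU ?mul0mx // => i.
by rewrite UGT mulmxA mulmxKV.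
Qed.

Section Flattening.
Variables (R : pzRingType) (n r : nat -> nat) (d : nat) (C : core R n r).
Variables (i0 : forall k, 'I_(n k)) (k : nat).

Lemma joinidx_row (p : RowT n k) (q q' : ColT n d k) x : (0 < x <= k)%N ->
  joinidx i0 p q x = joinidx i0 p q' x.
Proof. by move=> xk; rewrite /joinidx xk. Qed.

Lemma joinidx_col (p p' : RowT n k) (q : ColT n d k) x : (k < x)%N ->
  joinidx i0 p q x = joinidx i0 p' q x.
Proof. by rewrite /joinidx ltnNge => /negbTE ->; rewrite andbF. Qed.

Let row_i0 : RowT n k := finfun (fun j : 'I_k => i0 j.+1).
Let col_i0 : ColT n d k := finfun (fun j : 'I_(d - k) => i0 (k + j).+1).

Definition Xle_mx : 'M[R]_(#|RowT n k|, r k) :=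
  \matrix_(p, j) \sum_(a < r 0) ttrange C (joinidx i0 (enum_val p) col_i0) 0 k a j.

Definition Xge_mx : 'M[R]_(r k, #|ColT n d k|) :=
  \matrix_(j, q) \sum_(b < r d) ttrange C (joinidx i0 row_i0 (enum_val q)) k d j b.

Lemma flat_ttE (X : (forall k, 'I_(n k)) -> R) :
    (forall i, X i = ent (ttrange C i 0 d)) -> (k <= d)%N ->
  flat d X i0 k = Xle_mx *m Xge_mx.
Proof.
move=> XC kd; apply/matrixP => p q.
rewrite !mxE XC (ttrange_split _ _ (m := k)) ?kd // ent_mul.
apply: eq_bigr => j _; rewrite !mxE; congr (_ * _).
  apply: eq_bigr => a _.
  by rewrite (eq_ttrange C (i' := joinidx i0 (enum_val p) col_i0)) // => x /joinidx_row.
apply: eq_bigr => b _; rewrite (eq_ttrange C (i' := joinidx i0 row_i0 (enum_val q))) //.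
by move=> x /andP[/joinidx_col].
Qed.

Lemma mulmx_Xge_mx_eq0 (v : 'rV[R]_(r k)) :
  (forall i, v *m ttrange C i k d = 0) -> v *m Xge_mx = 0.
Proof.
move=> vC0; apply/matrixP => z q; rewrite !mxE.
under eq_bigr => j _ do rewrite mxE mulr_sumr.
rewrite exchange_big big1 // => b _.
by have /matrixP/(_ z b) := vC0 (joinidx i0 row_i0 (enum_val q)); rewrite !mxE.
Qed.

End Flattening.

Lemma interface_free_TTrank (R : fieldType) (n r : nat -> nat) d (C : core R n r)
    (X : (forall k, 'I_(n k)) -> R) k :
    (forall k, 0 < n k)%N -> has_TTrank d X r ->
    (forall i, X i = ent (ttrange C i 0 d)) -> (0 < k < d)%N ->
  interface_free d C k.
Proof.
move=> n_gt0 rkX XC /andP[k_gt0 kd] v vC0.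
pose i0 k : 'I_(n k) := Ordinal (n_gt0 k).
have freeXge : row_free (Xge_mx d C i0 k).
  rewrite /row_free eqn_leq rank_leq_row -{1}(rkX i0 k) ?k_gt0 //.
  by rewrite (flat_ttE i0 XC (ltnW kd)) // mxrankM_maxr.
by apply/eqP; rewrite -(mulmx_free_eq0 _ freeXge) mulmx_Xge_mx_eq0.
Qed.

Section TailSum.
Local Unset Implicit Arguments.
Variables (R : pzRingType) (n r : nat -> nat) (d : nat) (U T W : core R n r).
Implicit Types (i : forall k, 'I_(n k)).

Definition tail_sum i m :=
  \sum_(m.+1 <= k < d.+1) ttrange U i m k.-1 *m W k (i k) *m ttrange T i k d.

Lemma tail_sumS i m : (m < d)%N ->
  tail_sum i m = U m.+1 (i m.+1) *m tail_sum i m.+1 + W m.+1 (i m.+1) *m ttrange T i m.+1 d.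
Proof.
move=> md; rewrite /tail_sum big_ltn ?ltnS // ttrange_id mul1mx addrC mulmx_sumr.
congr (_ + _); apply: eq_big_nat => k /andP[mk _].
by rewrite (ttrangeSl _ _ (a := m)) ?ltn_predRL // -!mulmxA.
Qed.

Lemma eq_tail_sum i i' m : (forall x, (m < x)%N -> i x = i' x) ->
  tail_sum i m = tail_sum i' m.
Proof.
move=> eqi; apply: eq_big_nat => k /andP[mk _].
rewrite eqi // (eq_ttrange U (i' := i')) ?(eq_ttrange T (i' := i')) //.
  by move=> x /andP[kx _]; apply: eqi; lia.
by move=> x /andP[mx _]; apply: eqi.
Qed.

Lemma tail_sum_peel m : (m < d)%N -> (forall i, tail_sum i m = 0) ->
  forall i x, U m.+1 x *m tail_sum i m.+1 + W m.+1 x *m ttrange T i m.+1 d = 0.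
Proof.
move=> md S0 i x; rewrite -(S0 (dfwith i x)) (tail_sumS (dfwith i x)) // dfwith_in.
rewrite (eq_tail_sum (dfwith i x) i); last by move=> y my; rewrite dfwith_out // ltn_eqF.
rewrite (eq_ttrange T (i := dfwith i x) (i' := i)) // => y /andP[my _].
by rewrite dfwith_out // ltn_eqF.
Qed.

Hypothesis U_orth : forall k, (0 < k < d)%N -> \sum_x (U k x)^T *m U k x = 1%:M.
Hypothesis W_gauge : forall k, (0 < k < d)%N -> \sum_x (U k x)^T *m W k x = 0.
Hypothesis tail_sum0 : forall i, tail_sum i 0 = 0.

Lemma tail_sum_eq0 m : (m <= d)%N -> forall i, tail_sum i m = 0.
Proof.
elim: m => [|m IH] md i; first exact: tail_sum0.
have [md_eq|md'] := eqVneq m.+1 d; first by rewrite /tail_sum big_geq // md_eq.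
have mk : (0 < m.+1 < d)%N by lia.
have peel := tail_sum_peel m md (IH (ltnW md)) i.
transitivity ((\sum_x (U m.+1 x)^T *m U m.+1 x) *m tail_sum i m.+1 +
              (\sum_x (U m.+1 x)^T *m W m.+1 x) *m ttrange T i m.+1 d).
  by rewrite U_orth // W_gauge // mul1mx mul0mx addr0.
rewrite !mulmx_suml -big_split /= big1 // => x _.
by rewrite -!mulmxA -mulmxDr peel mulmx0.
Qed.

Hypothesis n_gt0 : forall k, (0 < n k)%N.
Hypothesis T_free : forall k, (0 < k < d)%N -> interface_free d T k.

Lemma gauged_cores_eq0 k : (0 < k <= d)%N -> forall x, W k x = 0.
Proof.
case: k => // k /= kd x.
have WT0 i : W k.+1 x *m ttrange T i k.+1 d = 0.
  have := tail_sum_peel k kd (tail_sum_eq0 k (ltnW kd)) i x.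
  by rewrite tail_sum_eq0 // mulmx0 add0r.
have [kd'|kd'] := eqVneq k.+1 d.
  by have := WT0 (fun k => Ordinal (n_gt0 k)); rewrite -kd' ttrange_id mulmx1.
by apply: interface_free_eq0 WT0; apply: T_free; lia.
Qed.

End TailSum.

Theorem lemma12 (R : realFieldType) (d : nat) (n r : nat -> nat)
    (U Ut dV dVt : core R n r) (X V : (forall k, 'I_(n k)) -> R) :
  (2 <= d)%N ->
  (forall k, 0 < n k)%N ->
  r 0%N = 1%N -> r d = 1%N ->
  (* X lies in M_r *)
  has_TTrank d X r ->
  (* U_1..U_d : left-orthogonal TT decomposition of X *)
  (forall i, X i = ent (ttrange U i 0 d)) ->
  (forall k, (0 < k < d)%N -> (leftunf (U k))^T *m leftunf (U k) = 1%:M) ->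
  (* Ut_1..Ut_d : obtained from U by right-orthogonalization (gauge
     transformation by invertible matrices) and right-orthogonal *)
  (exists G : forall k, 'M[R]_(r k),
     [/\ G 0%N = 1%:M, G d = 1%:M,
         (forall k, (0 < k < d)%N -> G k \in unitmx) &
         (forall k (ik : 'I_(n k)), (0 < k <= d)%N ->
            U k ik *m G k = G k.-1 *m Ut k ik)]) ->
  (forall k, (1 < k <= d)%N -> rightunf (Ut k) *m (rightunf (Ut k))^T = 1%:M) ->
  (* first representation of V *)
  (forall i, V i = ent (\sum_(1 <= k < d.+1)
                          ttrange U i 0 k.-1 *m dV k (i k) *m ttrange U i k d)) ->
  (forall k, (0 < k < d)%N -> (leftunf (dV k))^T *m leftunf (U k) = 0) ->
  (* second representation of V *)
  (forall i, V i = ent (\sum_(1 <= k < d.+1)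
                          ttrange U i 0 k.-1 *m dVt k (i k) *m ttrange Ut i k d)) ->
  (forall k, (0 < k < d)%N -> (leftunf (dVt k))^T *m leftunf (U k) = 0) ->
  (forall k, (0 < k < d)%N ->
     forall Rk : 'M[R]_(r k), Rk \in unitmx ->
       (forall i, Xge d U i k.+1 = Xge d Ut i k.+1 *m Rk) ->
       leftunf (dVt k) = leftunf (dV k) *m Rk^T)
  /\ leftunf (dVt d) = leftunf (dV d).
Proof.
move=> d_ge2 n_gt0 r0 rd rkX XU U_orth [G [_ Gd G_unit UG]] _ V1 dV_gauge V2 dVt_gauge.
have U_Ut i k : (k <= d)%N -> ttrange U i k d = G k *m ttrange Ut i k d.
  by move=> kd; rewrite (ttrange_gauge UG) ?kd ?leqnn // Gd mulmx1.
have Ut_free k : (0 < k < d)%N -> interface_free d Ut k.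
  move=> kd; apply: (interface_free_gauge (G_unit k kd)).
    by move=> i; apply: U_Ut; lia.
  exact: interface_free_TTrank n_gt0 rkX XU kd.
pose W k x := dV k x *m G k - dVt k x.
have W0 : forall k, (0 < k <= d)%N -> forall x, W k x = 0.
  apply: (gauged_cores_eq0 _ _ _ _ U) n_gt0 Ut_free.
  - by move=> k kd; rewrite -tr_leftunf_mul U_orth.
  - move=> k kd; rewrite /W; under eq_bigr do rewrite mulmxBr mulmxA.
    rewrite sumrB -mulmx_suml (leftunf_orthogonal (dV_gauge k kd)).
    by rewrite (leftunf_orthogonal (dVt_gauge k kd)) mul0mx subr0.
  - move=> i; have /eqP := ent_inj r0 rd (etrans (esym (V1 i)) (V2 i)).
    rewrite -subr_eq0 -sumrB => /eqP <-; apply: eq_big_nat => k /andP[_ kd].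
    by rewrite U_Ut // /W mulmxBr mulmxBl !mulmxA.
have dVt_dV k : (0 < k <= d)%N -> forall x, dVt k x = dV k x *m G k.
  by move=> kd x; apply/esym/eqP; rewrite -subr_eq0; apply/eqP/W0.
split=> [k kd Rk _ UUt_R|]; last first.
  by apply: eq_leftunf => x; rewrite dVt_dV ?Gd ?mulmx1 //; lia.
have GR : G k = Rk^T.
  apply/eqP; rewrite -subr_eq0; apply/eqP/(interface_free_eq0 (Ut_free k kd)) => i.
  have := congr1 trmx (UUt_R i); rewrite /Xge trmx_mul !trmxK /= => U_RUt.
  by rewrite mulmxBl -U_RUt -U_Ut ?subrr //; lia.
rewrite -GR -leftunf_mulmxr; apply: eq_leftunf => x.
by apply: dVt_dV; lia.
Qed.
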